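(* Let $\mathbb F$ be a field of characteristic $2$, $S=\{R_0,\dots,R_d\}$ a quasi-thin scheme on $X$, $x\in X$, $\mathcal T=\mathcal T(x)$, $E_a^*=E_a^*(x)$, and $\mathcal J_1=\langle\{E_a^*JE_b^*:R_a,R_b\in S,\ \max\{k_a,k_b\}=2\}\rangle_{\mathbb F}$. Then: (i) $MN,NM\in\mathcal J_1$ for all $M\in\mathcal T$ and $N\in\mathcal J_1$; (ii) $N^3=O$ for every $N\in\mathcal J_1$; (iii) $\mathcal J_1$ is a two-sided nilpotent ideal of $\mathcal T$, and in particular $\mathcal J_1$ is contained in the Jacobson radical of $\mathcal T$.
   Context: Let $X$ be a nonempty finite set. A scheme of class $d$ on $X$ is a partition $S=\{R_0,\dots,R_d\}$ of $X\times X$ into nonempty sets such that $R_0=\{(b,b):b\in X\}$; for each $c$ there is $c'$ with $R_{c'}=\{(f,e):(e,f)\in R_c\}$; and for all $i,j,k$ the intersection number $p_{ij}^k=|\{\ell\in X:(m,\ell)\in R_i,(\ell,n)\in R_j\}|$ does not depend on $(m,n)\in R_k$. The valency is $k_a=p_{aa'}^0$; quasi-thin means all $k_a\le 2$. For $y\in X$, $yR_a=\{z:(y,z)\in R_a\}$; $A_a\in M_X(\mathbb F)$ is the $(0,1)$ adjacency matrix of $R_a$, $E_a^*(y)$ is the diagonal $(0,1)$-matrix with ones exactly at positions indexed by $yR_a$, $J$ the all-ones matrix, $O$ the zero matrix; $\mathcal T(y)$ is the $\mathbb F$-subalgebra of $M_X(\mathbb F)$ generated by $A_0,\dots,A_d,E_0^*(y),\dots,E_d^*(y)$.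 $\langle Y\rangle_{\mathbb F}$ is the $\mathbb F$-span (zero space if $Y=\varnothing$). *)

From HB Require Import structures.
From mathcomp Require Import all_boot all_order all_algebra.
Set Implicit Arguments. Unset Strict Implicit. Unset Printing Implicit Defensive.
Import GRing.Theory.
Local Open Scope ring_scope.

(* The finite set X is 'I_n; relation R_a is encoded by a function
   r : 'I_n -> 'I_n -> 'I_d.+1 with (y,z) \in R_a  <->  r y z = a.
   tr a is the index a' of the transposed relation. *)

Section Scheme.
Variables (n d : nat) (r : 'I_n -> 'I_n -> 'I_d.+1) (tr : 'I_d.+1 -> 'I_d.+1).

Definition pnum (i j : 'I_d.+1) (m m' : 'I_n) : nat :=
  #|[set l : 'I_n | (r m l == i) && (r l m' == j)]|.

Definition is_scheme : Prop :=
  [/\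
      (forall a : 'I_d.+1, exists y z, r y z = a),
      (forall y z, r y z = ord0 <-> y = z),
      (forall c y z, r z y = c <-> r y z = tr c) &
      (forall i j k m m' m2 m2', r m m' = k -> r m2 m2' = k ->
          pnum i j m m' = pnum i j m2 m2')].

(* valency k_a = p_{a a'}^0, computed at the pair (y,y) \in R_0 *)
Definition valency (y : 'I_n) (a : 'I_d.+1) : nat := pnum a (tr a) y y.

Definition quasi_thin (y : 'I_n) : Prop := forall a, (valency y a <= 2)%N.

Variable F : fieldType.

Definition adjmx (a : 'I_d.+1) : 'M[F]_n := \matrix_(y, z) (r y z == a)%:R.

Definition Estar (x : 'I_n) (a : 'I_d.+1) : 'M[F]_n :=
  \matrix_(y, z) ((y == z) && (r x y == a))%:R.

Definition Jmx : 'M[F]_n := const_mx 1.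

Inductive inT (x : 'I_n) : 'M[F]_n -> Prop :=
  | inT_A a : inT x (adjmx a)
  | inT_E a : inT x (Estar x a)
  | inT_1 : inT x 1%:M
  | inT_0 : inT x 0
  | inT_add M N : inT x M -> inT x N -> inT x (M + N)
  | inT_scale (c : F) M : inT x M -> inT x (c *: M)
  | inT_mul M N : inT x M -> inT x N -> inT x (M *m N).

Definition inJ1 (x : 'I_n) (N : 'M[F]_n) : Prop :=
  exists c : 'I_d.+1 -> 'I_d.+1 -> F,
    N = \sum_(a < d.+1) \sum_(b < d.+1 | maxn (valency x a) (valency x b) == 2%N)
          c a b *: (Estar x a *m Jmx *m Estar x b).

End Scheme.

Section Ideals.
Variables (F : fieldType) (n : nat).
Implicit Types (A L I : 'M[F]_n -> Prop).

Definition left_ideal A L : Prop :=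
  [/\ forall M, L M -> A M, L 0,
      forall M N, L M -> L N -> L (M + N) &
      forall M N, A M -> L N -> L (M *m N)].

Definition two_sided_ideal A I : Prop :=
  [/\ forall M, I M -> A M, I 0,
      forall M N, I M -> I N -> I (M + N),
      forall M N, A M -> I N -> I (M *m N) &
      forall M N, A M -> I N -> I (N *m M)].

Definition maximal_left_ideal A L : Prop :=
  [/\ left_ideal A L, (exists M, A M /\ ~ L M) &
      forall L', left_ideal A L' -> (forall M, L M -> L' M) ->
        (forall M, L' M <-> L M) \/ (forall M, L' M <-> A M)].

Definition jacobson_radical A (M : 'M[F]_n) : Prop :=
  A M /\ forall L, maximal_left_ideal A L -> L M.

Definition mxprod (s : seq 'M[F]_n) : 'M[F]_n := foldr (@mulmx F n n n) 1%:M s.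

Definition nilpotent_ideal I : Prop :=
  exists m : nat, forall s : seq 'M[F]_n,
    size s = m -> (forall M, M \in s -> I M) -> mxprod s = 0.

End Ideals.

(* Call y thin when its class x R_{r(x,y)} has valency 1; by quasi-thinness the
   other classes have exactly two points.  In characteristic 2 a sum over X of
   a function that is constant on each class therefore reduces to a sum over
   the thin points.  Entrywise, J_1 consists of the matrices that are constant
   on each cell x R_a * x R_b and vanish on cells with both classes thin.  This
   shape is kept by E*_a trivially and by A_c via the intersection numbers
   (for a thin y, r(y,w) depends only on r(x,w)); by transposition it is also
   kept on the right.  In N1 N2 N3 with N2 in J_1 both summations reduce to
   thin points, where N2 vanishes.  Finally, a nilpotent left ideal lies in
   every maximal left ideal L: otherwise 1 = l + t N with l in L, and l = 1 - t N
   is invertible in T. *)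

From HB Require Import structures.
From mathcomp Require Import all_boot all_order all_algebra.
Import GRing.Theory.
Local Open Scope ring_scope.
Set Implicit Arguments. Unset Strict Implicit. Unset Printing Implicit Defensive.

Section NilpotentLeftIdeal.
Variables (F : fieldType) (n : nat) (A : 'M[F]_n -> Prop).
Hypotheses (A0 : A 0) (A1 : A 1%:M)
  (AD : forall M N, A M -> A N -> A (M + N))
  (AM : forall M N, A M -> A N -> A (M *m N)).
Implicit Types (L I : 'M[F]_n -> Prop) (K M N : 'M[F]_n).

Lemma mxprod_nseqSr K m :
  mxprod (nseq m.+1 K) = mxprod (nseq m K) *m K.
Proof.
elim: m => [|m IHm]; first by rewrite /= mulmx1 mul1mx.
by move: IHm => /= IHm; rewrite -mulmxA -IHm.
Qed.

Lemma mulmx_geometric K m :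
  (\sum_(i < m) mxprod (nseq i K)) *m (1%:M - K) = 1%:M - mxprod (nseq m K).
Proof.
elim: m => [|m IHm]; first by rewrite big_ord0 mul0mx subrr.
by rewrite big_ord_recr mulmxDl IHm mulmxBr mulmx1 -mxprod_nseqSr addrA subrK.
Qed.

Lemma mxprod_nseq_closed K m : A K -> A (mxprod (nseq m K)).
Proof. by move=> AK; elim: m => [|m IHm] //=; exact: AM. Qed.

Definition adjoin_left L N M : Prop :=
  exists l t, [/\ L l, A t & M = l + t *m N].

Lemma left_ideal_adjoin L N :
  left_ideal A L -> A N -> left_ideal A (adjoin_left L N).
Proof.
case=> LA L0 LD LM AN; split.
- by move=> _ [l [t [Ll At ->]]]; apply: AD; [exact: LA | exact: AM].
- by exists 0, 0; rewrite mul0mx addr0.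
- move=> _ _ [l1 [t1 [Ll1 At1 ->]]] [l2 [t2 [Ll2 At2 ->]]].
  exists (l1 + l2), (t1 + t2); split; [exact: LD | exact: AD |].
  by rewrite mulmxDl addrACA.
- move=> M _ AM' [l [t [Ll At ->]]].
  exists (M *m l), (M *m t); split; [exact: LM | exact: AM |].
  by rewrite mulmxDr mulmxA.
Qed.

Lemma left_ideal_full L : left_ideal A L -> L 1%:M -> forall M, A M -> L M.
Proof. by case=> _ _ _ LM L1 M AM'; rewrite -(mulmx1 M); exact: LM. Qed.

(* [1 - K] has the left inverse [1 + K + ... + K^(m-1)] in [A]. *)
Lemma left_ideal_one_unipotent L K m : left_ideal A L -> A K ->
  mxprod (nseq m K) = 0 -> L (1%:M - K) -> L 1%:M.
Proof.
case=> LA L0 LD LM AK Km0 LK.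
rewrite -[1%:M](subr0 1%:M) -Km0 -mulmx_geometric; apply: LM LK.
by apply: (big_ind A) => // i _; exact: mxprod_nseq_closed.
Qed.

Lemma nilpotent_ideal_nil I N :
  nilpotent_ideal I -> I N -> exists m, mxprod (nseq m N) = 0.
Proof.
case=> m Im IN; exists m; apply: Im; first exact: size_nseq.
by move=> M; rewrite mem_nseq => /andP[_ /eqP ->].
Qed.

Lemma nilpotent_left_ideal_jacobson I N :
  left_ideal A I -> nilpotent_ideal I -> I N -> jacobson_radical A N.
Proof.
case=> IA _ _ IM nilI IN; split; first exact: IA.
move=> L [idL [M0 [AM0 notLM0]] maxL].
have LsubL' M : L M -> adjoin_left L N M.
  by move=> LM; exists M, 0; rewrite mul0mx addr0.
have [eqL | eqA] := maxL _ (left_ideal_adjoin idL (IA _ IN)) LsubL'.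
  by apply/eqL; exists 0, 1%:M; rewrite mul1mx add0r; case: idL.
have [l [t [Ll At e1]]] := proj2 (eqA 1%:M) A1.
have IK := IM _ _ At IN; have [m Km0] := nilpotent_ideal_nil nilI IK.
case: notLM0; apply: left_ideal_full AM0 => //.
apply: (left_ideal_one_unipotent idL (IA _ IK) Km0).
by rewrite e1 addrK.
Qed.

End NilpotentLeftIdeal.

Section QuasiThin.
Variables (F : fieldType) (n d : nat) (r : 'I_n -> 'I_n -> 'I_d.+1)
  (tr : 'I_d.+1 -> 'I_d.+1) (x : 'I_n).
Hypotheses (scheme : is_scheme r tr) (qthin : quasi_thin r tr x)
  (char2 : (2 \in [pchar F])%N).
Implicit Types (M N : 'M[F]_n) (y z w : 'I_n) (a b c : 'I_d.+1).

Local Notation k := (valency r tr x).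
Local Notation E := (Estar r F x).
Local Notation adj := (adjmx r F).

Lemma rel_tr_eq c y w : (r y w == c) = (r w y == tr c).
Proof. by case: scheme => _ _ r_tr _; apply/eqP/eqP => /(r_tr c w y). Qed.

Lemma pnum_class i j y y' :
  r x y = r x y' -> pnum r i j x y = pnum r i j x y'.
Proof. by case: scheme => _ _ _ pnum_const /esym; exact: pnum_const. Qed.

Lemma valency_card b : k b = #|[set w | r x w == b]|.
Proof.
by apply: eq_card => w; rewrite !inE -rel_tr_eq andb_idr // => /eqP <-.
Qed.

Definition thin w := (k (r x w) <= 1)%N.

Lemma thin_uniq y y' : thin y -> r x y' = r x y -> y' = y.
Proof.
rewrite /thin valency_card => thin_y xy'; apply/eqP; apply: contraLR thin_y.
rewrite -ltnNge => ney.
apply: leq_trans (subset_leq_card (_ : [set y'; y] \subset _)).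
  by rewrite cards2 ney.
by apply/subsetP => w; rewrite !inE => /orP[] /eqP ->; rewrite ?xy'.
Qed.

(* [p^{r x w}_{r x y, r y w}] counts the [l] with [r x l = r x y] and
   [r l w = r y w]; for thin [y] the only candidate is [l = y]. *)
Lemma thin_rel_class y w1 w2 : thin y -> r x w1 = r x w2 -> r y w1 = r y w2.
Proof.
move=> thin_y xw.
have : (0 < pnum r (r x y) (r y w1) x w1)%N.
  by rewrite card_gt0; apply/set0Pn; exists y; rewrite inE !eqxx.
rewrite (pnum_class _ _ xw) card_gt0 => /set0Pn[l].
by rewrite inE => /andP[/eqP /(thin_uniq thin_y) -> /eqP].
Qed.

Definition rep b : 'I_n := odflt x [pick y | r x y == b].

Lemma rep_class y : r x (rep (r x y)) = r x y.
Proof. by rewrite /rep; case: pickP => [y0 /eqP | /(_ y)] //; rewrite eqxx. Qed.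

Lemma card_thick_class b : (1 < k b)%N -> #|[set w | r x w == b]| = 2%N.
Proof. by rewrite -valency_card => k_gt1; apply/eqP; rewrite eqn_leq qthin. Qed.

Lemma sum_thin (f : 'I_n -> F) :
  (forall w, ~~ thin w -> f w = f (rep (r x w))) ->
  \sum_w f w = \sum_(w | thin w) f w.
Proof.
move=> f_class; rewrite (bigID thin) /= -[RHS]addr0; congr (_ + _).
rewrite (partition_big (r x) predT) //=; apply: big1 => b _.
have [thin_b | thick_b] := leqP (k b) 1.
  by apply: big_pred0 => w; apply/andP => -[+ /eqP xw]; rewrite /thin xw thin_b.
rewrite (eq_bigr (fun=> f (rep b))); last by move=> w /andP[/f_class -> /eqP ->].
rewrite sumr_const (_ : #|_| = 2%N).
  by rewrite -mulr_natr (pcharf0 char2) mulr0.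
rewrite -(card_thick_class thick_b); apply: eq_card => w.
by rewrite unfold_in inE /= andb_idl // => /eqP xw; rewrite /thin xw -ltnNge.
Qed.

Lemma sum_by_class (g : 'I_d.+1 -> F) (P : pred 'I_n) :
  \sum_w (P w)%:R * g (r x w) =
  \sum_b g b * #|[set w | (r x w == b) && P w]|%:R.
Proof.
rewrite (partition_big (r x) predT) //=; apply: eq_bigr => b _.
rewrite (eq_bigr (fun w => (P w)%:R * g b)); last by move=> w /eqP ->.
rewrite -big_distrl /= mulrC; congr (_ * _).
rewrite (eq_bigr (fun w => if P w then 1 else 0)); last by move=> w _; case: (P w).
by rewrite -big_mkcondr sumr_const; congr (_ *+ _); apply: eq_card => w; rewrite inE.
Qed.

Definition cellwise N :=
  forall y y' z z', r x y = r x y' -> r x z = r x z' -> N y z = N y' z'.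

Definition J1_form N := cellwise N /\ forall y z, thin y -> thin z -> N y z = 0.

Lemma cellwise_rep N y z : cellwise N -> N y z = N (rep (r x y)) (rep (r x z)).
Proof. by move=> cwN; apply: cwN; rewrite rep_class. Qed.

Lemma J1_form0 : J1_form 0.
Proof. by split=> [y y' z z' _ _ | y z _ _]; rewrite !mxE. Qed.

Lemma J1_formD N1 N2 : J1_form N1 -> J1_form N2 -> J1_form (N1 + N2).
Proof.
move=> [cw1 th1] [cw2 th2]; split=> [y y' z z' ey ez | y z thy thz].
  by rewrite !mxE (cw1 y y' z z') // (cw2 y y' z z').
by rewrite !mxE th1 // th2 // addr0.
Qed.

Lemma J1_formZ (s : F) N : J1_form N -> J1_form (s *: N).
Proof.
move=> [cwN thN]; split=> [y y' z z' ey ez | y z thy thz].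
  by rewrite !mxE (cwN y y' z z').
by rewrite !mxE thN // mulr0.
Qed.

Lemma J1_form_trmx N : J1_form N -> J1_form N^T.
Proof.
move=> [cwN thN]; split=> [y y' z z' ey ez | y z thy thz]; rewrite !mxE.
  exact: cwN.
exact: thN.
Qed.

Lemma J1_form_mulEl a N : J1_form N -> J1_form (E a *m N).
Proof.
have entry y z : (E a *m N) y z = (r x y == a)%:R * N y z.
  rewrite mxE (bigD1 y) //= big1 ?addr0 => [|w /negbTE nwy]; first by rewrite mxE eqxx.
  by rewrite mxE eq_sym nwy mul0r.
move=> [cwN thN]; split=> [y y' z z' ey ez | y z thy thz]; rewrite !entry.
  by rewrite ey (cwN y y' z z').
by rewrite thN // mulr0.
Qed.

Lemma card_class_rel b c y y' : r x y = r x y' ->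
  #|[set w | (r x w == b) && (r y w == c)]| =
  #|[set w | (r x w == b) && (r y' w == c)]|.
Proof.
have card_pnum u :
    #|[set w | (r x w == b) && (r u w == c)]| = pnum r b (tr c) x u.
  by apply: eq_card => w; rewrite !inE (rel_tr_eq c u).
by rewrite !card_pnum; exact: pnum_class.
Qed.

Lemma J1_form_mulAl c N : J1_form N -> J1_form (adj c *m N).
Proof.
have entry y z : (adj c *m N) y z = \sum_w (r y w == c)%:R * N w z.
  by rewrite mxE; apply: eq_bigr => w _; rewrite mxE.
move=> [cwN thN]; split=> [y y' z z' ey ez | y z thy thz]; rewrite !entry.
  under eq_bigr do rewrite (cellwise_rep _ _ cwN).
  under [RHS]eq_bigr do rewrite (cellwise_rep _ _ cwN).
  rewrite -ez !(sum_by_class (fun b => N (rep b) (rep (r x z)))).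
  by apply: eq_bigr => b _; rewrite (card_class_rel _ _ ey).
rewrite sum_thin => [|w _]; first by apply: big1 => w thw; rewrite thN ?mulr0.
have xw := esym (rep_class w).
by rewrite (thin_rel_class thy xw) (cwN w _ z z xw).
Qed.

Lemma trmx_adjmx c : (adj c)^T = adj (tr c).
Proof. by apply/matrixP => y z; rewrite !mxE rel_tr_eq. Qed.

Lemma trmx_Estar a : (E a)^T = E a.
Proof. by apply/matrixP => y z; rewrite !mxE eq_sym; case: eqP => // ->. Qed.

Lemma inT_trmx M : inT r x M -> inT r x M^T.
Proof.
elim=> [c | a | | | M1 M2 _ T1 _ T2 | s M1 _ T1 | M1 M2 _ T1 _ T2].
- by rewrite trmx_adjmx; exact: inT_A.
- by rewrite trmx_Estar; exact: inT_E.
- by rewrite trmx1; exact: inT_1.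
- by rewrite trmx0; exact: inT_0.
- by rewrite linearD; exact: inT_add.
- by rewrite linearZ; exact: inT_scale.
- by rewrite trmx_mul; exact: inT_mul.
Qed.

Lemma J1_form_mull M N : inT r x M -> J1_form N -> J1_form (M *m N).
Proof.
move=> TM; elim: TM N
  => [c | a | | | M1 M2 _ J1 _ J2 | s M1 _ J1 | M1 M2 _ J1 _ J2] N JN.
- exact: J1_form_mulAl.
- exact: J1_form_mulEl.
- by rewrite mul1mx.
- by rewrite mul0mx; exact: J1_form0.
- by rewrite mulmxDl; apply: J1_formD; [exact: J1 | exact: J2].
- by rewrite -scalemxAl; apply: J1_formZ; exact: J1.
- by rewrite -mulmxA; apply: J1; exact: J2.
Qed.

Lemma J1_form_mulr M N : inT r x M -> J1_form N -> J1_form (N *m M).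
Proof.
move=> TM JN; rewrite -[N *m M]trmxK trmx_mul; apply: J1_form_trmx.
by apply: J1_form_mull; [exact: inT_trmx | exact: J1_form_trmx].
Qed.

Lemma EJE_entry a b y z :
  (E a *m Jmx n F *m E b) y z = (r x y == a)%:R * (r x z == b)%:R.
Proof.
rewrite mxE (bigD1 z) //= big1 ?addr0 => [|w /negbTE nwz]; last first.
  by rewrite [E b w z]mxE nwz mulr0.
rewrite [E b z z]mxE eqxx /= mxE (bigD1 y) //= big1 ?addr0 => [|w /negbTE nwy].
  by rewrite !mxE eqxx /= mulr1.
by rewrite mxE eq_sym nwy mul0r.
Qed.

Lemma J1_comb_entry (P : rel 'I_d.+1) (s : 'I_d.+1 -> 'I_d.+1 -> F) y z :
  (\sum_a \sum_(b | P a b) s a b *: (E a *m Jmx n F *m E b)) y z =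
  if P (r x y) (r x z) then s (r x y) (r x z) else 0.
Proof.
rewrite summxE (bigD1 (r x y)) //= [X in _ + X]big1 ?addr0 => [|a /negbTE nay].
  rewrite summxE big_mkcond (bigD1 (r x z)) //= big1 ?addr0 => [|b /negbTE nbz].
    by case: ifP; rewrite // mxE EJE_entry !eqxx !mulr1.
  by case: ifP; rewrite // mxE EJE_entry eq_sym nbz !mulr0.
by rewrite summxE big1 // => b _; rewrite mxE EJE_entry eq_sym nay mul0r mulr0.
Qed.

Lemma inJ1_J1_form N : inJ1 r tr x N <-> J1_form N.
Proof.
split=> [[s ->] | [cwN thN]].
  split=> [y y' z z' ey ez | y z thy thz]; rewrite !J1_comb_entry ?ey ?ez //.
  by rewrite ltn_eqF // ltnS geq_max; exact/andP.
exists (fun a b => N (rep a) (rep b)); apply/matrixP => y z.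
rewrite J1_comb_entry -cellwise_rep //; case: ifP => // /negbT k_neq2.
have : (maxn (k (r x y)) (k (r x z)) <= 1)%N.
  by rewrite -ltnS ltn_neqAle k_neq2 geq_max !qthin.
by rewrite geq_max => /andP[thy thz]; exact: thN.
Qed.

Lemma Jmx_inT : inT r x (Jmx n F).
Proof.
have -> : Jmx n F = \sum_c adj c.
  apply/matrixP => y z; rewrite summxE mxE (bigD1 (r y z)) //= big1 ?addr0.
    by rewrite mxE eqxx.
  by move=> c /negbTE nc; rewrite mxE eq_sym nc.
by apply: big_ind => [|M1 M2|c _]; [exact: inT_0 | exact: inT_add | exact: inT_A].
Qed.

Lemma inJ1_inT N : inJ1 r tr x N -> inT r x N.
Proof.
case=> s ->; apply: big_ind => [|M1 M2|a _]; [exact: inT_0 | exact: inT_add |].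
apply: big_ind => [|M1 M2|b _]; [exact: inT_0 | exact: inT_add |].
apply/inT_scale/inT_mul; last exact: inT_E.
by apply: inT_mul; [exact: inT_E | exact: Jmx_inT].
Qed.

Lemma cellwise_mul N1 N2 : cellwise N1 -> cellwise N2 -> cellwise (N1 *m N2).
Proof.
move=> cw1 cw2 y y' z z' ey ez; rewrite !mxE; apply: eq_bigr => w _.
by rewrite (cw1 y y' w w) // (cw2 w w z z').
Qed.

Lemma mulmx_thin_sum N1 N2 y z : cellwise N1 -> cellwise N2 ->
  (N1 *m N2) y z = \sum_(w | thin w) N1 y w * N2 w z.
Proof.
move=> cw1 cw2; rewrite mxE; apply: sum_thin => w _.
have xw := esym (rep_class w).
by rewrite (cw1 y y w _ erefl xw) (cw2 w _ z z xw).
Qed.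

Lemma mulmx_J1_form_thin N1 N2 y z : cellwise N1 -> J1_form N2 -> thin z ->
  (N1 *m N2) y z = 0.
Proof.
move=> cw1 [cw2 th2] thz; rewrite mulmx_thin_sum // big1 // => w thw.
by rewrite th2 // mulr0.
Qed.

Lemma mulmx3_J1_form N1 N2 N3 : cellwise N1 -> J1_form N2 -> cellwise N3 ->
  N1 *m N2 *m N3 = 0.
Proof.
move=> cw1 J2 cw3; have cw12 := cellwise_mul cw1 J2.1.
apply/matrixP => y z; rewrite mulmx_thin_sum // [RHS]mxE big1 // => v thv.
by rewrite mulmx_J1_form_thin // mul0r.
Qed.

Lemma inJ1_mull M N : inT r x M -> inJ1 r tr x N -> inJ1 r tr x (M *m N).
Proof. by move=> TM /inJ1_J1_form JN; apply/inJ1_J1_form; exact: J1_form_mull. Qed.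

Lemma inJ1_mulr M N : inT r x M -> inJ1 r tr x N -> inJ1 r tr x (N *m M).
Proof. by move=> TM /inJ1_J1_form JN; apply/inJ1_J1_form; exact: J1_form_mulr. Qed.

Lemma inJ1_mul3 N1 N2 N3 :
  inJ1 r tr x N1 -> inJ1 r tr x N2 -> inJ1 r tr x N3 -> N1 *m N2 *m N3 = 0.
Proof.
move=> /inJ1_J1_form[cw1 _] /inJ1_J1_form J2 /inJ1_J1_form[cw3 _].
exact: mulmx3_J1_form.
Qed.

Lemma inJ1_two_sided_ideal : two_sided_ideal (inT (F:=F) r x) (inJ1 r tr x).
Proof.
split=> [|||M N|M N]; [exact: inJ1_inT | | | exact: inJ1_mull | exact: inJ1_mulr].
  exact/inJ1_J1_form/J1_form0.
by move=> M N /inJ1_J1_form JM /inJ1_J1_form JN; apply/inJ1_J1_form/J1_formD.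
Qed.

Lemma inJ1_nilpotent : nilpotent_ideal (inJ1 (F:=F) r tr x).
Proof.
exists 3 => -[|N1 [|N2 [|N3 [|? ?]]]] //= _ J1s.
by rewrite mulmx1 mulmxA; apply: inJ1_mul3; apply: J1s; rewrite !inE eqxx ?orbT.
Qed.

End QuasiThin.

Theorem corollary6p7 (F : fieldType) (n d : nat)
    (r : 'I_n -> 'I_n -> 'I_d.+1) (tr : 'I_d.+1 -> 'I_d.+1) (x : 'I_n) :
  (0 < n)%N ->
  (2 \in [pchar F])%N ->
  is_scheme r tr ->
  quasi_thin r tr x ->
  [/\ (forall M N : 'M[F]_n, inT r x M -> inJ1 r tr x N ->
         inJ1 r tr x (M *m N) /\ inJ1 r tr x (N *m M)),
      (forall N : 'M[F]_n, inJ1 r tr x N -> N *m N *m N = 0) &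
      [/\ two_sided_ideal (inT (F:=F) r x) (inJ1 (F:=F) r tr x),
          nilpotent_ideal (inJ1 (F:=F) r tr x) &
          forall N : 'M[F]_n, inJ1 r tr x N -> jacobson_radical (inT (F:=F) r x) N]].
Proof.
move=> _ char2 scheme qthin.
have J1_ideal := inJ1_two_sided_ideal scheme qthin char2.
have J1_nil := inJ1_nilpotent scheme qthin char2.
split=> [M N TM JN | N JN | ].
- by split; [exact: (inJ1_mull scheme qthin char2) |
             exact: (inJ1_mulr scheme qthin char2)].
- exact: (inJ1_mul3 scheme qthin char2).
split=> // N; apply: nilpotent_left_ideal_jacobson J1_nil;
  [exact: inT_0 | exact: inT_1 | exact: inT_add | exact: inT_mul | by case: J1_ideal].
Qed.
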